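(* Let $q\ge 4$. If five distinct points of $\mathcal O_1$ are contained in a solid $\Sigma$ of $\mathrm{PG}(U_1)$, then they lie in a twisted cubic of $\mathcal O_1$ (i.e. in $\theta(L)$ for some $q$-order subline $L$ of $\mathrm{PG}(1,q^3)$), and this twisted cubic equals $\Sigma\cap\mathcal O_1$.
   Context: $q$ is a prime power. Let $U_1\subset\mathbb F_{q^3}^8$ be the set of vectors $(a,b^{q^2},b^{q},c,b,c^{q},c^{q^2},d)$ with $a,d\in\mathbb F_q$, $b,c\in\mathbb F_{q^3}$; it is an $8$-dimensional $\mathbb F_q$-vector space, so $\mathrm{PG}(U_1)\cong\mathrm{PG}(7,q)$. For $(a,b,c,d)\ne 0$ let $P(a,b,c,d)$ be the point of $\mathrm{PG}(U_1)$ spanned by this vector. Let $\mathcal O_1=\{P(1,t,t^{q^2+q},t^{q^2+q+1}) : t\in\mathbb F_{q^3}\}\cup\{P(0,0,0,1)\}$ (a set of $q^3+1$ points; note $P(1,t,t^{q^2+q},t^{q^2+q+1})$ is the vector $(1,t)\otimes(1,t^q)\otimes(1,t^{q^2})$). Let $\theta:\mathrm{PG}(1,q^3)\to\mathcal O_1$ be the bijection $\langle(1,t)\rangle\mapsto P(1,t,t^{q^2+q},t^{q^2+q+1})$, $\langle(0,1)\rangle\mapsto P(0,0,0,1)$. A $q$-order subline of $\mathrm{PG}(1,q^3)$ is the image of $\mathrm{PG}(1,q)=\{\langle(1,t)\rangle:t\in\mathbb F_q\}\cup\{\langle(0,1)\rangle\}$ under an element of $\mathrm{PGL}(2,q^3)$.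 For every $q$-order subline $L$, $\theta(L)$ is a twisted cubic of $\mathrm{PG}(U_1)$ spanning a solid (e.g. $\theta(\mathrm{PG}(1,q))=\{P(1,t,t^2,t^3):t\in\mathbb F_q\}\cup\{P(0,0,0,1)\}$); these are called the twisted cubics of $\mathcal O_1$. A solid is a $3$-dimensional projective subspace. *)

From HB Require Import structures.
From mathcomp Require Import all_boot all_order all_algebra all_field.
Set Implicit Arguments. Unset Strict Implicit. Unset Printing Implicit Defensive.
Import GRing.Theory.
Local Open Scope ring_scope.

(* F plays the role of F_{q^3} (hypothesis #|F| = q^3 in the theorem);
   the subfield F_q is the set of fixed points of x |-> x^q. *)
Definition Fq (F : finFieldType) (q : nat) (x : F) : bool := x ^+ q == x.

Definition vecU1 (F : finFieldType) (q : nat) (a b c d : F) : 'rV[F]_8 :=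
  \row_(i < 8) nth 0 [:: a; b ^+ (q ^ 2)%N; b ^+ q; c; b; c ^+ q; c ^+ (q ^ 2)%N; d] i.

Definition inU1 (F : finFieldType) (q : nat) (v : 'rV[F]_8) : Prop :=
  exists a b c d : F, Fq q a /\ Fq q d /\ v = vecU1 q a b c d.

Definition Fq_span (F : finFieldType) (q : nat) (u : 'I_4 -> 'rV[F]_8) (v : 'rV[F]_8) : Prop :=
  exists l : 'I_4 -> F, (forall i, Fq q (l i)) /\ v = \sum_(i < 4) l i *: u i.

Definition Fq_indep (F : finFieldType) (q : nat) (u : 'I_4 -> 'rV[F]_8) : Prop :=
  forall l : 'I_4 -> F, (forall i, Fq q (l i)) ->
    \sum_(i < 4) l i *: u i = 0 -> forall i, l i = 0.

(* A solid of PG(U_1) = a 4-dimensional F_q-subspace of U_1, given by a basis u;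
   a point <v> lies in the solid iff Fq_span q u v. *)
Definition is_solid (F : finFieldType) (q : nat) (u : 'I_4 -> 'rV[F]_8) : Prop :=
  (forall i, inU1 q (u i)) /\ Fq_indep q u.

(* PG(1,q^3) is represented by option F: Some t = <(1,t)>, None = <(0,1)>. *)
Definition pg1 (F : finFieldType) (x y : F) : option F :=
  if x == 0 then None else Some (y / x).

Definition pgl_act (F : finFieldType) (M : 'M[F]_2) (p : option F) : option F :=
  match p with
  | Some t => pg1 (M 0 0 + M 0 1 * t) (M 1 0 + M 1 1 * t)
  | None => pg1 (M 0 1) (M 1 1)
  end.

Definition in_subline (F : finFieldType) (q : nat) (M : 'M[F]_2) (p : option F) : Prop :=
  exists s : option F,
    (match s with Some t => Fq q t | None => true end) /\ pgl_act M s = p.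

Definition theta_vec (F : finFieldType) (q : nat) (p : option F) : 'rV[F]_8 :=
  match p with
  | Some t => vecU1 q 1 t (t ^+ (q ^ 2 + q)%N) (t ^+ (q ^ 2 + q + 1)%N)
  | None => vecU1 q 0 0 0 1
  end.

(* A matrix M of GL(2, q^3) induces the linear map M ⊗ M^(q) ⊗ M^(q^2) of F^8, which sends
   theta(p) to an F_q-multiple of theta(M p).  So we may move the five points to
   infinity, 0, 1, s, r.  Five points of a solid are F_q-dependent (the trace turns an
   F-dependence of their F_q-coordinates into an F_q-dependence), and the coordinates a, b,
   c, d of such a dependence force s and r into F_q.  Then the twisted cubic theta(PG(1,q))
   lies in the solid spanned by theta of infinity, 0, 1, s, and running the same argument
   with any other point of the solid as fifth point puts it on the cubic. *)

From HB Require Import structures.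
From mathcomp Require Import all_boot all_order all_algebra all_field all_fingroup all_solvable.
From mathcomp Require Import ring zify.
Set Implicit Arguments. Unset Strict Implicit. Unset Printing Implicit Defensive.
Import GRing.Theory.
Local Open Scope ring_scope.

Section ProjectiveLine.
Variable F : finFieldType.
Implicit Types (M : 'M[F]_2) (p : option F) (x y : F).

Definition pg_x p : F := if p is Some _ then 1 else 0.
Definition pg_y p : F := if p is Some t then t else 1.

Lemma pg_coords_neq0 p : (pg_x p != 0) || (pg_y p != 0).
Proof. by case: p => [t|] /=; rewrite oner_eq0 ?orbT. Qed.

Lemma pg1_coords p : pg1 (pg_x p) (pg_y p) = p.
Proof. by case: p => [t|]; rewrite /pg1 /= ?oner_eq0 ?eqxx ?divr1. Qed.

Lemma pg1Z c x y : c != 0 -> pg1 (c * x) (c * y) = pg1 x y.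
Proof.
move=> c0; rewrite /pg1 mulf_eq0 (negbTE c0) /=; case: eqP => // /eqP x0.
by congr Some; field; rewrite c0 x0.
Qed.

Lemma pg1_coordsP x y : (x != 0) || (y != 0) ->
  exists2 c, c != 0 & x = c * pg_x (pg1 x y) /\ y = c * pg_y (pg1 x y).
Proof.
rewrite /pg1; case: eqP => [-> /= y0|/eqP x0 _]; first by exists y; rewrite ?mulr0 ?mulr1.
by exists x => //=; rewrite mulr1 mulrC divfK.
Qed.

Lemma pg_cross_neq0 p p' : p != p' -> pg_x p * pg_y p' - pg_y p * pg_x p' != 0.
Proof.
case: p => [t|]; case: p' => [t'|] //=; rewrite ?mul1r ?mulr1 ?mul0r ?mulr0 ?subr0 ?sub0r.
- by apply: contraNneq => /eqP; rewrite subr_eq0 => /eqP ->.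
- by rewrite oner_eq0.
- by rewrite oppr_eq0 oner_eq0.
Qed.

Lemma det_mx2 M : \det M = M 0 0 * M 1 1 - M 0 1 * M 1 0.
Proof.
rewrite (expand_det_row _ 0) !big_ord_recl big_ord0 addr0 /cofactor !det_mx11 !mxE /=.
have l0 : lift 0 (0 : 'I_1) = 1 :> 'I_2 by apply/val_inj.
have l1 : lift 1 (0 : 'I_1) = 0 :> 'I_2 by apply/val_inj.
have o0 : ord0 = 0 :> 'I_2 by apply/val_inj.
rewrite -[lift ord0 ord0]/(lift 0 (0 : 'I_1)) l0 -o0 l1 o0 expr0 expr1; ring.
Qed.

Lemma mx2_kernel M x y : \det M != 0 ->
  M 0 0 * x + M 0 1 * y = 0 -> M 1 0 * x + M 1 1 * y = 0 -> x = 0 /\ y = 0.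
Proof.
rewrite det_mx2 => dM e0 e1.
have dx : (M 0 0 * M 1 1 - M 0 1 * M 1 0) * x =
    M 1 1 * (M 0 0 * x + M 0 1 * y) - M 0 1 * (M 1 0 * x + M 1 1 * y) by ring.
have dy : (M 0 0 * M 1 1 - M 0 1 * M 1 0) * y =
    M 0 0 * (M 1 0 * x + M 1 1 * y) - M 1 0 * (M 0 0 * x + M 0 1 * y) by ring.
rewrite e0 e1 !mulr0 subrr in dx; rewrite e0 e1 !mulr0 subrr in dy.
move/eqP: dx; rewrite mulf_eq0 (negbTE dM) => /eqP ->.
by move/eqP: dy; rewrite mulf_eq0 (negbTE dM) => /eqP ->.
Qed.

Definition pgl_hom M x y := pg1 (M 0 0 * x + M 0 1 * y) (M 1 0 * x + M 1 1 * y).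

Lemma pgl_act_coords M p : pgl_act M p = pgl_hom M (pg_x p) (pg_y p).
Proof. by case: p => [t|] /=; rewrite /pgl_hom ?mulr1 ?mulr0 ?add0r ?mul1r. Qed.

Lemma pgl_coords_neq0 M p : \det M != 0 ->
  (M 0 0 * pg_x p + M 0 1 * pg_y p != 0) || (M 1 0 * pg_x p + M 1 1 * pg_y p != 0).
Proof.
move=> dM; rewrite -negb_and; apply/negP => /andP [/eqP e0 /eqP e1].
have [x0 y0] := mx2_kernel dM e0 e1.
by move: (pg_coords_neq0 p); rewrite x0 y0 eqxx.
Qed.

Lemma pgl_act_pg1 M x y : (x != 0) || (y != 0) -> pgl_act M (pg1 x y) = pgl_hom M x y.
Proof.
rewrite /pg1 /pgl_hom; case: eqP => [->|/eqP x0] /= h.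
  by rewrite -(pg1Z _ _ h) !mulr0 !add0r ![y * _]mulrC.
by rewrite -(pg1Z _ _ x0); congr pg1; field.
Qed.

Lemma pgl_actM M N p : \det N != 0 -> pgl_act M (pgl_act N p) = pgl_act (M *m N) p.
Proof.
move=> dN; rewrite [pgl_act N p]pgl_act_coords pgl_act_pg1 ?pgl_coords_neq0 //.
rewrite pgl_act_coords /pgl_hom !mxE !big_ord_recl !big_ord0 !addr0 /=.
have l0 : lift ord0 (ord0 : 'I_1) = 1 :> 'I_2 by apply/val_inj.
by rewrite l0; congr pg1; ring.
Qed.

Lemma pgl_act1 p : pgl_act 1%:M p = p.
Proof.
by case: p => [t|]; rewrite /= /pg1 !mxE /= ?mul0r ?mul1r ?addr0 ?add0r ?oner_eq0 ?divr1 ?eqxx.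
Qed.

Lemma pgl_actK M : \det M != 0 -> cancel (pgl_act M) (pgl_act (invmx M)).
Proof. by move=> dM p; rewrite pgl_actM // mulVmx ?pgl_act1 // unitmxE unitfE. Qed.

Lemma det_invmx_neq0 M : \det M != 0 -> \det (invmx M) != 0.
Proof. by rewrite det_inv invr_eq0. Qed.

Lemma pgl_actKV M : \det M != 0 -> cancel (pgl_act (invmx M)) (pgl_act M).
Proof.
by move=> dM p; rewrite pgl_actM ?det_invmx_neq0 ?mulmxV ?pgl_act1 ?unitmxE ?unitfE.
Qed.

Lemma pgl_frame p0 p1 p2 : p1 != p0 -> p2 != p0 -> p1 != p2 ->
  exists M, \det M != 0 /\
    [/\ pgl_act M None = p0, pgl_act M (Some 0) = p1 & pgl_act M (Some 1) = p2].
Proof.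
move=> /pg_cross_neq0 d10 /pg_cross_neq0 d20 /pg_cross_neq0 d12.
set x0 := pg_x p0 in d10 d20 *; set y0 := pg_y p0 in d10 d20 *.
set x1 := pg_x p1 in d10 d12 *; set y1 := pg_y p1 in d10 d12 *.
set x2 := pg_x p2 in d20 d12 *; set y2 := pg_y p2 in d20 d12 *.
(* (x2, y2) = a (x1, y1) + b (x0, y0) *)
pose a := (x2 * y0 - y2 * x0) / (x1 * y0 - y1 * x0).
pose b := (x1 * y2 - y1 * x2) / (x1 * y0 - y1 * x0).
have a0 : a != 0 by rewrite mulf_eq0 negb_or d20 invr_eq0 d10.
have b0 : b != 0 by rewrite mulf_eq0 negb_or d12 invr_eq0 d10.
pose M : 'M[F]_2 := \matrix_(i, j) (if j == 0 then a * (if i == 0 then x1 else y1)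
                                   else b * (if i == 0 then x0 else y0)).
have [M00 M01 M10 M11] : [/\ M 0 0 = a * x1, M 0 1 = b * x0, M 1 0 = a * y1 & M 1 1 = b * y0].
  by rewrite !mxE.
exists M; split.
  have -> : \det M = a * b * (x1 * y0 - y1 * x0) by rewrite det_mx2 M00 M01 M10 M11; ring.
  by apply: mulf_neq0 => //; apply: mulf_neq0.
rewrite /= M00 M01 M10 M11 !mulr0 !mulr1 !addr0.
have e2 : a * x1 + b * x0 = x2 /\ a * y1 + b * y0 = y2 by split; rewrite /a /b; field.
by rewrite !pg1Z // (proj1 e2) (proj2 e2) !pg1_coords.
Qed.

Definition base_frame (s : F) : seq (option F) := [:: None; Some 0; Some 1; Some s].

Lemma uniq_base_frame s : uniq (base_frame s) = (s != 0) && (s != 1).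
Proof.
by rewrite /= !inE !(inj_eq Some_inj) [0 == 1]eq_sym oner_eq0 ![_ == s]eq_sym andbT.
Qed.

Lemma mem_base_frame s t : (Some t \in base_frame s) = [|| t == 0, t == 1 | t == s].
Proof. by rewrite !inE !(inj_eq Some_inj). Qed.

Lemma pgl_frame5 (x : 'I_5 -> option F) : injective x ->
  exists M s r, [/\ \det M != 0, uniq (rcons (base_frame s) r) &
    forall i, x i = pgl_act M (nth None (rcons (base_frame s) r) i)].
Proof.
move=> x_inj.
have [M [dM [M0 M1 M2]]] : exists M, \det M != 0 /\
    [/\ pgl_act M None = x 0, pgl_act M (Some 0) = x 1 & pgl_act M (Some 1) = x 2].
  by apply: pgl_frame; rewrite (inj_eq x_inj).
have [N0 N1 N2] : [/\ pgl_act (invmx M) (x 0) = None,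
    pgl_act (invmx M) (x 1) = Some 0 & pgl_act (invmx M) (x 2) = Some 1].
  by rewrite -M0 -M1 -M2 !pgl_actK.
case E3 : (pgl_act (invmx M) (x 3)) => [s|]; last first.
  by move: (can_inj (pgl_actKV dM) (etrans E3 (esym N0))) => /x_inj.
set r := pgl_act (invmx M) (x 4).
have xE : forall i, x i = pgl_act M (nth None (rcons (base_frame s) r) i).
  move=> i; rewrite -[x i](pgl_actKV dM); congr (pgl_act M _).
  case: i => [[|[|[|[|[|//]]]]] hi] /=; rewrite -?N0 -?N1 -?N2 -?E3;
    by congr (pgl_act _ (x _)); apply: val_inj.
exists M, s, r; split => //.
apply/(uniqP None) => i j hi hj e_ij.
by move: (x_inj (Ordinal hi) (Ordinal hj)); rewrite !xE /= e_ij => /(_ erefl) [].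
Qed.

End ProjectiveLine.

Section FrobeniusCube.
Variables (F : finFieldType) (q : nat).
Hypothesis cardF : #|F| = (q ^ 3)%N.
Local Notation Fq := (@Fq F q).
Implicit Types (x y c : F) (M : 'M[F]_2) (p : option F) (u v : 'I_4 -> 'rV[F]_8).

Lemma q_gt1 : (1 < q)%N.
Proof. by have := finNzRing_gt1 F; rewrite cardF; case: q => [|[|]]. Qed.

Lemma pchar_nat_q : [pchar F].-nat q.
Proof.
have [p _ pF] := finPcharP F.
have := abelem_pgroup (fin_ring_pchar_abelem pF).
by rewrite /pgroup cardsT cardF pnatX orbF (eq_pnat _ (pcharf_eq pF)).
Qed.

Definition frob (x : F) := x ^+ q.

Lemma frob_is_zmod_morphism : zmod_morphism frob.
Proof. by move=> x y; rewrite /frob exprDn_pchar ?exprNn_pchar // pchar_nat_q. Qed.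

Lemma frob_is_monoid_morphism : monoid_morphism frob.
Proof. by split=> [|x y]; [exact: expr1n | exact: exprMn]. Qed.

HB.instance Definition _ := GRing.isZmodMorphism.Build F F frob frob_is_zmod_morphism.
HB.instance Definition _ := GRing.isMonoidMorphism.Build F F frob frob_is_monoid_morphism.

Lemma frobK3 x : frob (frob (frob x)) = x.
Proof. by rewrite /frob -!exprM -{2}(expf_card x) cardF !expnS expn0 muln1 mulnA. Qed.

Lemma frob_inj : injective frob.
Proof. by move=> x y e; rewrite -[x]frobK3 -[y]frobK3 e. Qed.

Lemma FqP x : reflect (frob x = x) (Fq x).
Proof. exact: eqP. Qed.

Lemma Fq_divring_closed : divring_closed Fq.
Proof.
split=> [|x y /FqP Fx /FqP Fy|x y /FqP Fx /FqP Fy]; apply/FqP; first exact: expr1n.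
  by rewrite rmorphB /= Fx Fy.
by rewrite fmorph_div /= Fx Fy.
Qed.

HB.instance Definition _ := GRing.isDivringClosed.Build F Fq Fq_divring_closed.

Definition traceq x := x + frob x + frob (frob x).

Lemma traceq_is_zmod_morphism : zmod_morphism traceq.
Proof. by move=> x y; rewrite /traceq !rmorphB /=; ring. Qed.

HB.instance Definition _ :=
  GRing.isZmodMorphism.Build F F traceq traceq_is_zmod_morphism.

Lemma Fq_traceq x : Fq (traceq x).
Proof. by apply/FqP; rewrite /traceq !rmorphD /= frobK3; ring. Qed.

Lemma traceqMFq x c : Fq c -> traceq (x * c) = traceq x * c.
Proof. by move=> /FqP Fc; rewrite /traceq !rmorphM /= !Fc; ring. Qed.

(* A polynomial of degree q^2 < #|F| cannot vanish on all of F. *)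
Lemma traceq_neq0 : exists b, traceq b != 0.
Proof.
pose P : {poly F} := 'X + 'X^q + 'X^(q * q).
have PE x : P.[x] = traceq x by rewrite /P !hornerE /traceq /frob exprM.
have q_gt1 := q_gt1.
have sizeP : size P = (q * q).+1.
  rewrite /P addrC size_polyDl size_polyXn // (leq_ltn_trans (size_polyD _ _)) //.
  by rewrite size_polyXn size_polyX gtn_max !ltnS; apply/andP; split; nia.
apply/existsP; apply: contraT; rewrite negb_exists => /forallP /= trace0.
have P_neq0 : P != 0 by rewrite -size_poly_eq0 sizeP.
have P_roots : all (root P) (enum F).
  by apply/allP => x _; rewrite /root PE; apply/negPn/trace0.
have := max_poly_roots P_neq0 P_roots (enum_uniq F).
rewrite -cardE cardF sizeP !expnS expn0 muln1; nia.
Qed.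

Lemma exp_q2 x : x ^+ (q ^ 2) = frob (frob x).
Proof. by rewrite /frob -exprM expnS expn1. Qed.

Definition normq x := x * frob x * frob (frob x).

Lemma Fq_normq x : Fq (normq x).
Proof. by apply/FqP; rewrite /normq !rmorphM /= frobK3; ring. Qed.

Lemma normq_eq0 x : (normq x == 0) = (x == 0).
Proof. by rewrite /normq !mulf_eq0 !fmorph_eq0 !orbb. Qed.

Definition bit (k : nat) (i : 'I_8) : 'I_2 := if odd (i %/ 2 ^ k) then 1 else 0.

(* The coordinates of (x, y) ⊗ (x, y)^q ⊗ (x, y)^(q^2) in F^2 ⊗ F^2 ⊗ F^2. *)
Definition frob_tensor x y : 'rV[F]_8 :=
  \row_i ([:: x; y]`_(bit 2 i) * frob [:: x; y]`_(bit 1 i) * frob (frob [:: x; y]`_(bit 0 i))).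

(* M ⊗ M^(q) ⊗ M^(q^2), acting on row vectors. *)
Definition frob_tensor_mx (M : 'M[F]_2) : 'M[F]_8 :=
  \matrix_(j, i) (M (bit 2 i) (bit 2 j) * frob (M (bit 1 i) (bit 1 j)) *
                  frob (frob (M (bit 0 i) (bit 0 j)))).

Lemma frob_tensor_mul M x y : frob_tensor x y *m frob_tensor_mx M =
  frob_tensor (M 0 0 * x + M 0 1 * y) (M 1 0 * x + M 1 1 * y).
Proof.
apply/rowP => i; rewrite !mxE !big_ord_recl big_ord0 !mxE.
case: i => [[|[|[|[|[|[|[|[|//]]]]]]]] ?]; rewrite /bit /= !rmorphD !rmorphM /=; ring.
Qed.

Lemma frob_tensorZ c x y : frob_tensor (c * x) (c * y) = normq c *: frob_tensor x y.
Proof.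
apply/rowP => i; rewrite !mxE /normq.
by case: i => [[|[|[|[|[|[|[|[|//]]]]]]]] ?]; rewrite /bit /= !rmorphM /=; ring.
Qed.

Lemma theta_vecE p : theta_vec q p = frob_tensor (pg_x p) (pg_y p).
Proof.
apply/rowP => i; case: p => [t|]; rewrite !mxE;
  case: i => [[|[|[|[|[|[|[|[|//]]]]]]]] ?];
  rewrite /bit /= ?exprD ?exp_q2 ?expr1 -?[_ ^+ q]/(frob _);
  rewrite ?rmorph0 ?rmorph1 ?rmorphM /= ?frobK3; ring.
Qed.

Lemma frob_tensor_pg1 x y : (x != 0) || (y != 0) ->
  exists2 c, Fq c && (c != 0) & frob_tensor x y = c *: theta_vec q (pg1 x y).
Proof.
move=> /pg1_coordsP [c c0]; set p := pg1 x y => -[-> ->].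
by exists (normq c); rewrite ?Fq_normq ?normq_eq0 // frob_tensorZ theta_vecE.
Qed.

Lemma theta_vec_mulmx M p : \det M != 0 -> exists2 c, Fq c && (c != 0) &
  theta_vec q p *m frob_tensor_mx M = c *: theta_vec q (pgl_act M p).
Proof.
move=> dM; rewrite theta_vecE frob_tensor_mul pgl_act_coords.
exact: frob_tensor_pg1 (pgl_coords_neq0 p dM).
Qed.

Definition Fq_dependent n (w : 'I_n -> 'rV[F]_8) :=
  exists l : 'I_n -> F, [/\ forall i, Fq (l i), exists i, l i != 0 & \sum_i l i *: w i = 0].

(* The trace turns a dependence over F into one over F_q. *)
Lemma Fq_kernel_neq0 m n (C : 'M[F]_(m, n)) : (n < m)%N -> (forall i j, Fq (C i j)) ->
  exists2 l : 'rV[F]_m, l != 0 & (forall i, Fq (l 0 i)) /\ l *m C = 0.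
Proof.
move=> lt_nm FqC.
have /rowV0Pn [v /sub_kermxP vC /rV0Pn [i0 vi0]] : kermx C != 0.
  by rewrite kermx_eq0 /row_free ltn_eqF // (leq_ltn_trans (rank_leq_col C)).
have [b trb] := traceq_neq0.
pose a := b / v 0 i0.
exists (map_mx (fun z => traceq (a * z)) v); last split.
- by apply/rV0Pn; exists i0; rewrite mxE divfK.
- by move=> i; rewrite mxE Fq_traceq.
apply/rowP => j; rewrite !mxE.
transitivity (traceq (a * (v *m C) 0 j)); last by rewrite vC mxE mulr0 raddf0.
rewrite mxE mulr_sumr raddf_sum; apply: eq_bigr => i _.
by rewrite !mxE mulrA -traceqMFq.
Qed.

Lemma Fq_span_dependent (u : 'I_4 -> 'rV[F]_8) (w : 'I_5 -> 'rV[F]_8) :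
  (forall i, Fq_span q u (w i)) -> Fq_dependent w.
Proof.
move=> /fin_all_exists [c cP].
have [l /rV0Pn l_neq0 [Fql lC]] := Fq_kernel_neq0 (C := \matrix_(i, j) c i j) isT
  (fun i j => etrans (congr1 Fq (mxE _ _ i j)) (proj1 (cP i) j)).
exists (fun i => l 0 i); split => //.
under eq_bigr => i _ do rewrite (proj2 (cP i)) scaler_sumr.
rewrite exchange_big /= big1 // => j _.
under eq_bigr => i _ do rewrite scalerA.
rewrite -scaler_suml; have /rowP/(_ j) := lC; rewrite !mxE => lCj.
have -> : \sum_i l 0 i * c i j = 0 by rewrite -[RHS]lCj; apply: eq_bigr => i _; rewrite mxE.
by rewrite scale0r.
Qed.

(* x ^+ (q ^ 2 + q): the coordinate c of theta_vec (Some x). *)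
Definition cofrob x := frob x * frob (frob x).

Lemma cofrob_Fq x : Fq x -> cofrob x = x ^+ 2.
Proof. by move=> /FqP Fx; rewrite /cofrob !Fx. Qed.

Lemma Fq_affine_root c0 c1 r : Fq c0 -> Fq c1 -> c1 != 0 -> c0 + c1 * r = 0 -> Fq r.
Proof.
move=> Fc0 Fc1 c1_neq0 /eqP; rewrite addrC addr_eq0 => /eqP c1r.
have -> : r = - c0 / c1 by rewrite -c1r mulrAC divff // mul1r.
exact: (rpred_div (rpredNr Fc0) Fc1).
Qed.

Lemma affine_root_cofrob c0 c1 r : Fq c0 -> Fq c1 -> c1 != 0 ->
  c0 + c1 * r = 0 -> c0 + c1 * cofrob r = 0 -> (r == 0) || (r == 1).
Proof.
move=> Fc0 Fc1 c1_neq0 e1 e2.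
have Fr := Fq_affine_root Fc0 Fc1 c1_neq0 e1.
have : c1 * (r * (r - 1)) = (c0 + c1 * cofrob r) - (c0 + c1 * r).
  by rewrite cofrob_Fq //; ring.
by rewrite e1 e2 subrr => /eqP; rewrite !mulf_eq0 (negbTE c1_neq0) subr_eq0.
Qed.

Lemma affine_cofrob la mu s : Fq la -> Fq mu -> mu != 0 -> ~~ Fq s ->
  cofrob (la + mu * s) = la + mu * cofrob s -> la = 0 /\ mu = 1.
Proof.
move=> /FqP Fla /FqP Fmu mu_neq0 Fs_out; have yx : frob s != s := Fs_out.
have frob_affine z : frob (la + mu * z) = la + mu * frob z.
  by rewrite rmorphD rmorphM /= Fla Fmu.
rewrite /cofrob !frob_affine.
set x := s in yx *; set y := frob s in yx *; set z := frob (frob s).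
have [fx fy fz] : [/\ frob x = y, frob y = z & frob z = x] by rewrite /z /x frobK3.
have zy : z != y by rewrite -fy -fx (inj_eq frob_inj).
have xz : x != z by rewrite -fz -fy (inj_eq frob_inj).
move=> G1.
have G2 := congr1 frob G1; rewrite rmorphM /= !frob_affine rmorphM /= fy fz in G2.
have G3 := congr1 frob G2; rewrite rmorphM /= !frob_affine rmorphM /= fz fx in G3.
have Ez : la + mu * z - z = 0.
  have : mu * (y - x) * (la + mu * z - z) = 0.
    transitivity (((la + mu * y) * (la + mu * z) - (la + mu * (y * z))) -
                  ((la + mu * z) * (la + mu * x) - (la + mu * (z * x)))); first by ring.
    by rewrite G1 G2 !subrr.
  by move/eqP; rewrite !mulf_eq0 (negbTE mu_neq0) subr_eq0 (negbTE yx) => /eqP.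
have Ey : la + mu * y - y = 0.
  have : mu * (x - z) * (la + mu * y - y) = 0.
    transitivity (((la + mu * x) * (la + mu * y) - (la + mu * (x * y))) -
                  ((la + mu * y) * (la + mu * z) - (la + mu * (y * z)))); first by ring.
    by rewrite G1 G3 !subrr.
  by move/eqP; rewrite !mulf_eq0 (negbTE mu_neq0) subr_eq0 (negbTE xz) => /eqP.
have mu1 : mu = 1.
  have : (mu - 1) * (z - y) = (la + mu * z - z) - (la + mu * y - y) by ring.
  by rewrite Ez Ey subrr => /eqP; rewrite mulf_eq0 !subr_eq0 (negbTE zy) orbF => /eqP.
by split=> //; move: Ez; rewrite mu1 mul1r addrK.
Qed.

Lemma cofrob_dependence a b c s t : Fq a -> Fq b -> Fq c ->
  s != 0 -> s != 1 -> t != 0 -> t != 1 -> t != s ->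
  a + b * s + c * t = 0 -> a + b * cofrob s + c * cofrob t = 0 ->
  (b = 0 /\ c = 0) \/ (Fq s /\ Fq t).
Proof.
move=> Fa Fb Fc s0 s1 t0 t1 ts e1 e2.
have [c0|c_neq0] := eqVneq c 0.
  have [b0|b_neq0] := eqVneq b 0; first by left.
  rewrite c0 !mul0r !addr0 in e1 e2.
  by have := affine_root_cofrob Fa Fb b_neq0 e1 e2; rewrite (negbTE s0) (negbTE s1).
have [b0|b_neq0] := eqVneq b 0.
  rewrite b0 !mul0r !addr0 in e1 e2.
  by have := affine_root_cofrob Fa Fc c_neq0 e1 e2; rewrite (negbTE t0) (negbTE t1).
right; pose la := - a / c; pose mu := - b / c.
have Fla : Fq la := rpred_div (rpredNr Fa) Fc.
have Fmu : Fq mu := rpred_div (rpredNr Fb) Fc.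
have mu_neq0 : mu != 0 by rewrite mulf_neq0 ?oppr_eq0 ?invr_eq0.
have affine_eq r : a + b * r + c * (la + mu * r) = 0 by rewrite /la /mu; field.
have affine_root r r' : a + b * r + c * r' = 0 -> r' = la + mu * r.
  move=> e; apply: (mulfI c_neq0); apply/eqP; rewrite -subr_eq0; apply/eqP.
  transitivity ((a + b * r + c * r') - (a + b * r + c * (la + mu * r))); first by ring.
  by rewrite e affine_eq subrr.
have tE := affine_root _ _ e1.
have Fs : Fq s.
  apply: contraT => Fs_out; have [|la0 mu1] := affine_cofrob Fla Fmu mu_neq0 Fs_out.
    by rewrite -tE; exact: affine_root.
  by move: ts; rewrite tE la0 mu1 add0r mul1r eqxx.
by rewrite tE; split=> //; exact: (rpredD Fla (rpredM Fmu Fs)).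
Qed.

Lemma frame_theta_dependence s t : uniq (rcons (base_frame s) (Some t)) ->
  Fq_dependent (fun i : 'I_5 => theta_vec q (nth None (rcons (base_frame s) (Some t)) i)) ->
  Fq s /\ Fq t.
Proof.
rewrite rcons_uniq uniq_base_frame mem_base_frame !negb_or.
case/andP => /and3P [t0 t1 ts] /andP [s0 s1] [l [Fql [i0 li0] dep]].
rewrite !big_ord_recl big_ord0 addr0 !theta_vecE /= in dep.
set l0 := l ord0 in dep li0; set l1 := l (lift ord0 ord0) in dep.
set l2 := l (lift ord0 (lift ord0 ord0)) in dep.
set l3 := l (lift ord0 (lift ord0 (lift ord0 ord0))) in dep.
set l4 := l (lift ord0 (lift ord0 (lift ord0 (lift ord0 ord0)))) in dep.
(* The coordinates a, c, b, d of the dependence. *)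
have coord (k : 'I_8) := congr1 (fun v : 'rV[F]_8 => v 0 k) dep.
have := coord 0; have := coord 3; have := coord 4; have := coord 7.
rewrite !mxE /bit /= !rmorph0 !rmorph1 => E7 E4 E3 E0.
have e1 : l2 + l3 * s + l4 * t = 0 by rewrite -E4; ring.
have e2 : l2 + l3 * cofrob s + l4 * cofrob t = 0 by rewrite -E3 /cofrob; ring.
have [[l3_0 l4_0]|//] := @cofrob_dependence l2 l3 l4 s t (Fql _) (Fql _) (Fql _) s0 s1 t0 t1 ts e1 e2.
have l2_0 : l2 = 0 by rewrite -e1 l3_0 l4_0; ring.
have l1_0 : l1 = 0 by rewrite -E0 l2_0 l3_0 l4_0; ring.
have l0_0 : l0 = 0 by rewrite -E7 l2_0 l3_0 l4_0; ring.
suff l_eq0 i : l i = 0 by move: li0; rewrite l_eq0 eqxx.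
case: i => [[|[|[|[|[|//]]]]] hi];
  [move: l0_0 | move: l1_0 | move: l2_0 | move: l3_0 | move: l4_0] => <-;
  by congr l; apply: val_inj.
Qed.

Lemma Fq_dependent_theta_pgl n M (p : 'I_n -> option F) : \det M != 0 ->
  Fq_dependent (fun i => theta_vec q (pgl_act M (p i))) ->
  Fq_dependent (fun i => theta_vec q (p i)).
Proof.
move=> dM [l [Fql [i0 li0] dep]].
have [c Fqc cE] := fin_all_exists2
  (fun i => theta_vec_mulmx (pgl_act M (p i)) (det_invmx_neq0 dM)).
exists (fun i => l i * c i); split.
- by move=> i; have /andP [Fc _] := Fqc i; exact: (rpredM (Fql i) Fc).
- by exists i0; have /andP [_ c0] := Fqc i0; rewrite mulf_neq0.
transitivity (\sum_i (l i *: theta_vec q (pgl_act M (p i))) *m frob_tensor_mx (invmx M)).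
  by apply: eq_bigr => i _; rewrite -scalemxAl cE pgl_actK // scalerA.
by rewrite -mulmx_suml dep mul0mx.
Qed.

Definition on_pg1q p : Prop := if p is Some t then Fq t else true.

Lemma Fq_spanZ u c w : Fq c -> Fq_span q u w -> Fq_span q u (c *: w).
Proof.
move=> Fc [l [Fl ->]]; exists (fun i => c * l i); split => [i|].
  exact: (rpredM Fc (Fl i)).
by rewrite scaler_sumr; apply: eq_bigr => i _; rewrite scalerA.
Qed.

Lemma Fq_spanD u w w' : Fq_span q u w -> Fq_span q u w' -> Fq_span q u (w + w').
Proof.
move=> [a [Fa ->]] [b [Fb ->]]; exists (fun i => a i + b i); split => [i|].
  exact: (rpredD (Fa i) (Fb i)).
by rewrite -big_split; apply: eq_bigr => i _; rewrite scalerDl.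
Qed.

Lemma Fq_span_trans u v w :
  (forall i, Fq_span q u (v i)) -> Fq_span q v w -> Fq_span q u w.
Proof.
move=> uv [l [Fl ->]]; elim/big_ind: _ => [|x y|i _]; last exact: Fq_spanZ.
- exists (fun=> 0); split=> [i|]; first exact: rpred0.
  by rewrite big1 // => i _; rewrite scale0r.
- exact: Fq_spanD.
Qed.

Lemma Fq_span_mulmx v w (A : 'M[F]_8) :
  Fq_span q v w -> Fq_span q (fun i => v i *m A) (w *m A).
Proof.
move=> [l [Fl ->]]; exists l; split => //.
by rewrite mulmx_suml; apply: eq_bigr => i _; rewrite scalemxAl.
Qed.

(* For tau in F_q the coordinates a, b, c, d of theta(tau) are 1, tau, tau^2, tau^3;
   ga and be solve be + ga * s^k = tau^k for k = 1, 2. *)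
Lemma theta_subline_span s r : Fq s -> s != 0 -> s != 1 -> on_pg1q r ->
  Fq_span q (fun i => theta_vec q (nth None (base_frame s) i)) (theta_vec q r).
Proof.
move=> Fs s0 s1; case: r => [tau Ftau|_]; last first.
  exists (fun i => (i == 0)%:R); split=> [i|]; first by case: (i == 0); [exact: rpred1|exact: rpred0].
  by rewrite !big_ord_recl big_ord0 /= !scale0r !addr0 scale1r.
have ss_neq0 : s * s - s != 0 by rewrite -[X in _ - X]mulr1 -mulrBr mulf_neq0 ?subr_eq0.
pose ga := (tau * tau - tau) / (s * s - s); pose be := tau - ga * s.
pose al := 1 - be - ga; pose de := tau * tau * tau - be - ga * (s * s * s).
have Fga : Fq ga := rpred_div (rpredB (rpredM Ftau Ftau) Ftau) (rpredB (rpredM Fs Fs) Fs).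
have Fbe : Fq be := rpredB Ftau (rpredM Fga Fs).
have Fal : Fq al := rpredB (rpredB (rpred1 _) Fbe) Fga.
have Fde : Fq de :=
  rpredB (rpredB (rpredM (rpredM Ftau Ftau) Ftau) Fbe) (rpredM Fga (rpredM (rpredM Fs Fs) Fs)).
rewrite theta_vecE; exists (fun i => [:: de; al; be; ga]`_i).
split=> [[[|[|[|[|//]]]] _]|] //=.
move/FqP: Ftau => ftau; move/FqP: Fs => fs.
rewrite !big_ord_recl big_ord0 addr0 !theta_vecE /=.
apply/rowP => k; rewrite !mxE.
by case: k => [[|[|[|[|[|[|[|[|//]]]]]]]] ?]; rewrite /bit /= ?rmorph0 ?rmorph1 ?ftau ?fs;
  rewrite /de /al /be /ga; field.
Qed.

Lemma frame_dependence u M s r : \det M != 0 -> uniq (rcons (base_frame s) r) ->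
  (forall p, p \in rcons (base_frame s) r -> Fq_span q u (theta_vec q (pgl_act M p))) ->
  Fq s /\ on_pg1q r.
Proof.
move=> dM fr_uniq fr_span.
have := Fq_span_dependent
  (fun i : 'I_5 => fr_span _ (mem_nth None (ltn_ord i : i < size (rcons (base_frame s) r))%N)).
move/(Fq_dependent_theta_pgl dM); clear fr_span.
case: r fr_uniq => [t fr_uniq|]; first exact: frame_theta_dependence.
by rewrite rcons_uniq.
Qed.

Lemma frame_span_subline u M s : \det M != 0 -> Fq s -> uniq (base_frame s) ->
  (forall p, p \in base_frame s -> Fq_span q u (theta_vec q (pgl_act M p))) ->
  forall p, Fq_span q u (theta_vec q p) <-> in_subline q M p.
Proof.
move=> dM Fs fr_uniq fr_span p; split=> [p_span|[r [r_q <-]]].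
  exists (pgl_act (invmx M) p); split; last exact: pgl_actKV.
  set r := pgl_act (invmx M) p.
  have [r_fr|r_new] := boolP (r \in base_frame s).
    by move: r_fr; rewrite !inE => /or4P [] /eqP ->; [|exact: rpred0|exact: rpred1|].
  have fr5_uniq : uniq (rcons (base_frame s) r) by rewrite rcons_uniq r_new.
  have fr5_span p' : p' \in rcons (base_frame s) r -> Fq_span q u (theta_vec q (pgl_act M p')).
    by rewrite mem_rcons inE => /predU1P [->|/fr_span //]; rewrite /r pgl_actKV.
  exact (frame_dependence dM fr5_uniq fr5_span).2.
move: fr_uniq; rewrite uniq_base_frame => /andP [s0 s1].
have [c /andP [Fc c_neq0] cE] := theta_vec_mulmx r dM.
rewrite -[theta_vec q _](scalerK c_neq0) -cE; apply: Fq_spanZ (rpredVr Fc) _.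
apply: Fq_span_trans (Fq_span_mulmx _ (theta_subline_span Fs s0 s1 (r_q : on_pg1q r))) => i.
have [d /andP [Fd _] ->] := theta_vec_mulmx (nth None (base_frame s) i) dM.
exact: Fq_spanZ Fd (fr_span _ (mem_nth None (ltn_ord i : i < size (base_frame s))%N)).
Qed.

End FrobeniusCube.

Theorem mainTheorem3 (F : finFieldType) (q : nat) (hq : (4 <= q)%N)
  (hF : #|F| = (q ^ 3)%N)
  (u : 'I_4 -> 'rV[F]_8) (hu : is_solid q u)
  (x : 'I_5 -> option F) (hx : injective x)
  (hin : forall i, Fq_span q u (theta_vec q (x i))) :
  exists M : 'M[F]_2, \det M != 0 /\
    (forall i, in_subline q M (x i)) /\
    (forall p : option F, Fq_span q u (theta_vec q p) <-> in_subline q M p).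
Proof.
have [M [s [r [dM fr_uniq xE]]]] := pgl_frame5 hx.
have fr_span p : p \in rcons (base_frame s) r -> Fq_span q u (theta_vec q (pgl_act M p)).
  by move=> /(nthP None) [i lt_i <-]; rewrite -(xE (Ordinal lt_i)).
have [Fs _] := frame_dependence hF dM fr_uniq fr_span.
move: fr_uniq; rewrite rcons_uniq => /andP [_ fr4_uniq].
have fr4_span p : p \in base_frame s -> Fq_span q u (theta_vec q (pgl_act M p)).
  by move=> p_fr; apply: fr_span; rewrite mem_rcons inE p_fr orbT.
have span_iff := frame_span_subline hF dM Fs fr4_uniq fr4_span.
exists M; split=> //; split=> [i|p]; last exact: span_iff.
exact/span_iff/hin.
Qed.
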